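(* Let $q$ be a power of a prime $p$ and let $n\ge 2$ be an integer such that every prime divisor of $n$ divides $p(q-1)$. Then $n$ is $\mathbb{F}_q$-practical.
   Context: A positive integer $n$ is $\mathbb{F}_q$-practical if for every integer $1\le k\le n-1$ the polynomial $x^n-1$ has a divisor of degree $k$ in $\mathbb{F}_q[x]$. *)

From HB Require Import structures.
From mathcomp Require Import all_boot all_order all_algebra all_field.
Set Implicit Arguments. Unset Strict Implicit. Unset Printing Implicit Defensive.
Import GRing.Theory.
Local Open Scope ring_scope.

(* n is F-practical: for every 1 <= k <= n-1, x^n - 1 has a divisor of degree k
   in F[x].  Degree k is expressed as size d = k.+1 (mathcomp's size = deg + 1). *)
Definition practical (F : fieldType) (n : nat) : Prop :=
  forall k : nat, (1 <= k <= n.-1)%N ->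
    exists d : {poly F}, (d %| 'X^n - 1) /\ size d = k.+1.

From HB Require Import structures.
From mathcomp Require Import all_boot all_order all_algebra all_field.
From mathcomp Require Import zify cyclic.
Set Implicit Arguments. Unset Strict Implicit. Unset Printing Implicit Defensive.
Import GRing.Theory.
Local Open Scope ring_scope.

(* If X^b - 1 = prod_z (X - z), then X^(ab) - 1 = (X^a - 1) * prod_(z <> 1) (X^a - z);
   multiplying the divisors of X^a - 1 of every degree <= a by partial products of
   the degree-a factors X^a - z yields divisors of X^(ab) - 1 of every degree.
   Over F_q the polynomial X^r - 1 splits both for r = p, where it is (X - 1)^p,
   and for r dividing q - 1, since F_q^* contains a primitive r-th root of unity.
   Peeling off the prime factors of n one at a time gives the theorem. *)

Section DegreeComplete.

Variable F : idomainType.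

Definition degree_complete (p : {poly F}) : Prop :=
  forall k, (k < size p)%N -> exists2 d : {poly F}, d %| p & size d = k.+1.

Definition splits (p : {poly F}) : Prop :=
  exists rs : seq F, p = \prod_(z <- rs) ('X - z%:P).

Lemma degree_complete_small (p : {poly F}) : (size p <= 2)%N -> degree_complete p.
Proof.
move=> le_p2 [|[|k]] lt_k; last by have := leq_trans lt_k le_p2.
  by exists 1; rewrite ?dvd1p ?size_poly1.
by exists p; rewrite ?dvdpp //; apply/eqP; rewrite eqn_leq le_p2 lt_k.
Qed.

(* Low degrees are covered by the divisors d of p, high degrees by the d * q;
   the two ranges overlap because deg q <= deg p. *)
Lemma degree_complete_mul (p q : {poly F}) :
  degree_complete p -> (size q <= size p)%N -> degree_complete (p * q).
Proof.
move=> cp le_qp k.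
have [->|q_neq0] := eqVneq q 0; first by rewrite mulr0 size_poly0.
have [->|p_neq0] := eqVneq p 0; first by rewrite mul0r size_poly0.
rewrite size_mul // => lt_k.
have [lt_kp|le_pk] := ltnP k (size p).
  by have [d dp szd] := cp k lt_kp; exists d; rewrite ?dvdp_mulr.
have q_gt0 : (0 < size q)%N by rewrite size_poly_gt0.
have [|d dp szd] := cp (k - (size q).-1)%N; first by lia.
exists (d * q); first by rewrite dvdp_mul2r.
by rewrite size_mul ?szd -?size_poly_eq0 ?szd //; lia.
Qed.

Lemma degree_complete_mul_prod (I : Type) (r : seq I) (Q : I -> {poly F})
    (p : {poly F}) :
  degree_complete p -> (forall i, size (Q i) <= size p)%N ->
  degree_complete (p * \prod_(i <- r) Q i).
Proof.
move=> cp le_Qp; elim: r => [|i r IH]; first by rewrite big_nil mulr1.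
rewrite big_cons mulrCA mulrC.
have [->|pP_neq0] := eqVneq (p * \prod_(j <- r) Q j) 0.
  by move=> k; rewrite mul0r size_poly0.
apply: degree_complete_mul IH _.
exact: leq_trans (le_Qp i) (dvdp_leq pP_neq0 (dvdp_mulIl _ _)).
Qed.

Lemma Xn_sub1_comp_Xn a b (rs : seq F) :
  'X^b - 1 = \prod_(z <- rs) ('X - z%:P) ->
  'X^(a * b) - 1 = \prod_(z <- rs) ('X^a - z%:P).
Proof.
move=> /(congr1 (comp_poly 'X^a)).
rewrite rmorph_prod rmorphB rmorph1 /= rmorphXn /= comp_polyX -exprM mulnC => ->.
by apply: eq_bigr => z _; rewrite rmorphB /= comp_polyX comp_polyC.
Qed.

Lemma degree_complete_Xn_sub1_mul a b :
  (0 < a)%N -> degree_complete ('X^a - 1) -> splits ('X^b - 1) ->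
  degree_complete ('X^(a * b) - 1).
Proof.
move=> a_gt0 ca [rs Eb].
have rs1 : 1 \in rs by rewrite -root_prod_XsubC -Eb rootE !hornerE expr1n subrr.
rewrite (Xn_sub1_comp_Xn a Eb) (perm_big _ (perm_to_rem rs1)) big_cons polyC1.
apply: degree_complete_mul_prod ca _ => z.
by rewrite -polyC1 !size_XnsubC.
Qed.

Lemma degree_complete_Xn_sub1 n :
  (0 < n)%N -> (forall r, prime r -> (r %| n)%N -> splits ('X^r - 1)) ->
  degree_complete ('X^n - 1).
Proof.
elim/ltn_ind: n => n IH n_gt0 split_n.
have [n_le1|n_gt1] := leqP n 1.
  by apply: degree_complete_small; rewrite -polyC1 size_XnsubC.
have r_prime := pdiv_prime n_gt1; have r_dvd := pdiv_dvd n.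
have m_gt0 : (0 < n %/ pdiv n)%N by rewrite divn_gt0 ?pdiv_gt0 // dvdn_leq.
rewrite -(divnK r_dvd).
apply: (degree_complete_Xn_sub1_mul m_gt0 _ (split_n _ r_prime r_dvd)).
apply: (IH _ _ m_gt0) => [|r r_pr r_dvd_m]; first by rewrite ltn_Pdiv ?prime_gt1.
exact: split_n _ r_pr (dvdn_trans r_dvd_m (dvdn_div r_dvd)).
Qed.

Lemma splits_Xn_sub1_pchar p : p \in [pchar F] -> splits ('X^p - 1).
Proof.
move=> pcharFp; exists (nseq p 1).
have pcharFXp : p \in [pchar {poly F}] by rewrite pchar_poly.
have := pFrobenius_autB_comm pcharFXp (commr1 'X).
by rewrite !pFrobenius_autE expr1n big_nseq iter_mulr_1 polyC1 => ->.
Qed.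

End DegreeComplete.

Lemma splits_Xn_sub1_prim (F : fieldType) n (z : F) :
  n.-primitive_root z -> splits ('X^n - 1 : {poly F}).
Proof.
by move=> prim_z; exists [seq z ^+ i | i <- index_iota 0 n]; rewrite big_map factor_Xn_sub_1.
Qed.

Lemma finField_prim_root (F : finFieldType) : exists z : F, (#|F|.-1).-primitive_root z.
Proof.
have q_gt1 : (1 < #|F|)%N := card_finNzRing_gt1 F.
have /hasP[z _ prim_z] : has (#|F|.-1).-primitive_root (enum (predC1 (0 : F))).
  apply: has_prim_root; first by lia.
  - apply/allP => x; rewrite mem_enum inE unity_rootE => x_neq0.
    apply/eqP/(mulfI x_neq0); rewrite mulr1 -exprS prednK ?expf_card //; lia.
  - exact: enum_uniq.
  - by rewrite -cardE cardC1.
by exists z.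
Qed.

Lemma splits_Xn_sub1_dvd_card (F : finFieldType) r :
  (r %| #|F|.-1)%N -> splits ('X^r - 1 : {poly F}).
Proof.
move=> r_dvd; have [z prim_z] := finField_prim_root F.
exact: splits_Xn_sub1_prim (dvdn_prim_root prim_z r_dvd).
Qed.

Theorem theorem5p5 (p e : nat) (F : finFieldType) (n : nat)
  (hp : prime p) (he : (0 < e)%N) (hF : #|F| = (p ^ e)%N)
  (hn : (2 <= n)%N)
  (hdiv : forall r : nat, prime r -> (r %| n)%N -> (r %| p * (p ^ e).-1)%N) :
  practical F n.
Proof.
have pcharFp : p \in [pchar F] := card_finPcharP hF hp.
have split_r r : prime r -> (r %| n)%N -> splits ('X^r - 1 : {poly F}).
  move=> r_prime /(hdiv r r_prime); rewrite Euclid_dvdM // => /orP[r_dvd_p|r_dvd_q1].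
    by move: r_dvd_p; rewrite dvdn_prime2 // => /eqP ->; apply: splits_Xn_sub1_pchar.
  by apply: splits_Xn_sub1_dvd_card; rewrite hF.
move=> k /andP[_ k_le].
have lt_k : (k < size ('X^n - 1 : {poly F})%R)%N by rewrite -polyC1 size_XnsubC; lia.
have [d d_dvd d_size] := degree_complete_Xn_sub1 (ltnW hn) split_r lt_k.
by exists d.
Qed.
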